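(* Let $\phi : G\to H$ be an epic quiver homomorphism. Then $\phi$ is epi-coessential if and only if the following conditions hold: (1) the edge map $E(\phi)$ is bijective; (2) if $v\in\mathrm{indep}(G)$, then $V(\phi)(v)\in\mathrm{indep}(H)$; (3) if $w\in\mathrm{indep}(H)$, there is a unique $v\in\mathrm{indep}(G)$ such that $V(\phi)(v)=w$.
   Context: A quiver is a quadruple $(V,E,\sigma,\tau)$ with $V,E$ sets and $\sigma,\tau : E \to V$ functions (source and target). A quiver homomorphism $\phi$ is a pair $(V(\phi),E(\phi))$ of functions on vertices and edges commuting with sources and targets; composition is componentwise. A homomorphism is epic (an epimorphism in the category of quivers) iff both $V(\phi)$ and $E(\phi)$ are surjective. An epic $\phi: G\to H$ is epi-coessential if for every quiver $A$ and homomorphism $\alpha : A\to G$, $\phi\circ\alpha$ epic implies $\alpha$ epic. A vertex $v$ of a quiver $G$ is independent if $\sigma_G^{-1}(v)=\tau_G^{-1}(v)=\emptyset$, and $\mathrm{indep}(G)$ is the set of independent vertices of $G$. *)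

Record quiver : Type := Quiver {
  qV : Type;
  qE : Type;
  src : qE -> qV;
  tgt : qE -> qV
}.

Record qhom (G H : quiver) : Type := QHom {
  Vmap : qV G -> qV H;
  Emap : qE G -> qE H;
  Vmap_src : forall e, Vmap (src G e) = src H (Emap e);
  Vmap_tgt : forall e, Vmap (tgt G e) = tgt H (Emap e)
}.
Arguments Vmap {G H}.
Arguments Emap {G H}.

Definition qcomp {A G H : quiver} (psi : qhom G H) (phi : qhom A G) : qhom A H.
Proof.
  refine (QHom A H (fun v => Vmap psi (Vmap phi v)) (fun e => Emap psi (Emap phi e)) _ _).
  - intro e. rewrite (Vmap_src _ _ phi), (Vmap_src _ _ psi). reflexivity.
  - intro e. rewrite (Vmap_tgt _ _ phi), (Vmap_tgt _ _ psi). reflexivity.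
Defined.

Definition surjective {X Y : Type} (f : X -> Y) : Prop := forall y, exists x, f x = y.
Definition injective {X Y : Type} (f : X -> Y) : Prop := forall x1 x2, f x1 = f x2 -> x1 = x2.
Definition bijective {X Y : Type} (f : X -> Y) : Prop := injective f /\ surjective f.

Definition epic {G H : quiver} (phi : qhom G H) : Prop :=
  surjective (Vmap phi) /\ surjective (Emap phi).

Definition epi_coessential {G H : quiver} (phi : qhom G H) : Prop :=
  epic phi /\
  forall (A : quiver) (alpha : qhom A G), epic (qcomp phi alpha) -> epic alpha.

Definition indep (G : quiver) (v : qV G) : Prop :=
  (forall e, src G e <> v) /\ (forall e, tgt G e <> v).

(* An epimorphism can only fail to be epi-coessential if some proper part of G
   is already mapped onto H. Two kinds of parts are available: dropping all but
   one preimage of every edge (ruled out exactly when the edge map is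
   injective), and deleting one independent vertex (ruled out exactly when no
   independent vertex shares its image with another vertex, which amounts to
   conditions (2) and (3)). Conversely, with injective edge map every edge of G,
   and hence every non-independent vertex, is reached by any alpha with
   phi o alpha epic, and independent vertices are reached because phi is
   injective on them and maps them to independent vertices. *)

From Stdlib Require Import Classical ClassicalEpsilon.

Lemma surjective_section {X Y : Type} (f : X -> Y) :
  surjective f -> exists s : Y -> X, forall y, f (s y) = y.
Proof.
  intro Hf.
  exists (fun y => proj1_sig (constructive_indefinite_description _ (Hf y))).
  intro y. exact (proj2_sig (constructive_indefinite_description _ (Hf y))).
Qed.

Lemma injective_of_surjective_section {X Y : Type} (f : X -> Y) (s : Y -> X) :
  (forall y, f (s y) = y) -> surjective s -> injective f.
Proof.
  intros fK Hs x1 x2 E.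
  destruct (Hs x1) as [y1 <-], (Hs x2) as [y2 <-].
  rewrite !fK in E. now subst.
Qed.

Lemma surjective_of_comp_injective {X Y Z : Type} (f : X -> Y) (g : Y -> Z) :
  injective g -> surjective (fun x => g (f x)) -> surjective f.
Proof.
  intros Hg Hgf y. destruct (Hgf (g y)) as [x Ex]. exists x. now apply Hg.
Qed.

Lemma indep_of_indep_image {G H : quiver} (phi : qhom G H) (x : qV G) :
  indep H (Vmap phi x) -> indep G x.
Proof.
  intros [Hsrc Htgt]; split; intros e E.
  - apply (Hsrc (Emap phi e)). now rewrite <- Vmap_src, E.
  - apply (Htgt (Emap phi e)). now rewrite <- Vmap_tgt, E.
Qed.

Lemma not_indep_incident (G : quiver) (x : qV G) :
  ~ indep G x -> exists e, src G e = x \/ tgt G e = x.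
Proof.
  intro Hx. apply NNPP. intro Hn. apply Hx.
  split; intros e E; apply Hn; exists e; auto.
Qed.

Section Subquivers.
Variable G : quiver.

Definition reindex_edges {Y : Type} (s : Y -> qE G) : quiver :=
  Quiver (qV G) Y (fun y => src G (s y)) (fun y => tgt G (s y)).

Definition reindex_edges_hom {Y : Type} (s : Y -> qE G) :
  qhom (reindex_edges s) G :=
  QHom (reindex_edges s) G (fun x => x) s (fun _ => eq_refl) (fun _ => eq_refl).

Definition delete_vertex (v : qV G) (Hv : indep G v) : quiver :=
  Quiver {x : qV G | x <> v} (qE G)
    (fun e => exist _ (src G e) (proj1 Hv e))
    (fun e => exist _ (tgt G e) (proj2 Hv e)).

Definition delete_vertex_hom (v : qV G) (Hv : indep G v) :
  qhom (delete_vertex v Hv) G :=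
  QHom (delete_vertex v Hv) G (@proj1_sig _ _) (fun e => e)
    (fun _ => eq_refl) (fun _ => eq_refl).

Lemma delete_vertex_hom_not_epic (v : qV G) (Hv : indep G v) :
  ~ epic (delete_vertex_hom v Hv).
Proof. intros [HV _]. destruct (HV v) as [[x Hx] E]. exact (Hx E). Qed.

End Subquivers.

Section Coessential.
Variables (G H : quiver) (phi : qhom G H).
Hypothesis phi_coess : epi_coessential phi.

Lemma coessential_Emap_injective : injective (Emap phi).
Proof.
  destruct phi_coess as [[HV HE] Hco].
  destruct (surjective_section _ HE) as [s sK].
  apply (injective_of_surjective_section _ s sK).
  apply (Hco _ (reindex_edges_hom G s)). split.
  - exact HV.
  - intro y. exists y. apply sK.
Qed.

(* Otherwise deleting [v] would leave a proper subquiver still mapped onto H. *)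
Lemma coessential_indep_fiber (v x : qV G) :
  indep G v -> Vmap phi x = Vmap phi v -> x = v.
Proof.
  intros Hv Exv. apply NNPP. intro Hxv.
  destruct phi_coess as [[HV HE] Hco].
  apply (delete_vertex_hom_not_epic G v Hv), Hco. split.
  - intro y. destruct (HV y) as [z <-].
    destruct (classic (z = v)) as [->|Hz].
    + now exists (exist _ x Hxv).
    + now exists (exist _ z Hz).
  - exact HE.
Qed.

Lemma coessential_indep_image (v : qV G) :
  indep G v -> indep H (Vmap phi v).
Proof.
  intro Hv. apply NNPP. intro Hn.
  destruct (not_indep_incident _ _ Hn) as [f Hf].
  destruct (proj2 (proj1 phi_coess) f) as [e <-].
  destruct Hf as [Hf|Hf].
  - apply (proj1 Hv e), coessential_indep_fiber; [exact Hv|].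
    now rewrite Vmap_src.
  - apply (proj2 Hv e), coessential_indep_fiber; [exact Hv|].
    now rewrite Vmap_tgt.
Qed.

End Coessential.

Section Criterion.
Variables (G H : quiver) (phi : qhom G H).
Hypothesis Emap_inj : injective (Emap phi).
Hypothesis indep_image : forall v, indep G v -> indep H (Vmap phi v).
Hypothesis indep_fiber :
  forall v v', indep G v -> indep G v' -> Vmap phi v = Vmap phi v' -> v = v'.
Variables (A : quiver) (alpha : qhom A G).
Hypothesis comp_epic : epic (qcomp phi alpha).

Lemma criterion_Emap_surjective : surjective (Emap alpha).
Proof.
  exact (surjective_of_comp_injective _ _ Emap_inj (proj2 comp_epic)).
Qed.

Lemma criterion_Vmap_surjective : surjective (Vmap alpha).
Proof.
  intro x. destruct (classic (indep G x)) as [Hx|Hx].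
  - destruct (proj1 comp_epic (Vmap phi x)) as [a Ea]. simpl in Ea.
    exists a. apply indep_fiber; [|exact Hx|exact Ea].
    apply (indep_of_indep_image phi). rewrite Ea. now apply indep_image.
  - destruct (not_indep_incident _ _ Hx) as [e [<-|<-]];
      destruct criterion_Emap_surjective with e as [a <-].
    + exists (src A a). apply Vmap_src.
    + exists (tgt A a). apply Vmap_tgt.
Qed.

End Criterion.

Theorem mainTheorem7 (G H : quiver) (phi : qhom G H) (Hepi : epic phi) :
  epi_coessential phi <->
  (bijective (Emap phi) /\
   (forall v : qV G, indep G v -> indep H (Vmap phi v)) /\
   (forall w : qV H, indep H w ->
      exists v : qV G, (indep G v /\ Vmap phi v = w) /\
        forall v' : qV G, indep G v' /\ Vmap phi v' = w -> v' = v)).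
Proof.
  split.
  - intro Hco. split; [|split].
    + split; [exact (coessential_Emap_injective _ _ _ Hco)|exact (proj2 Hepi)].
    + exact (coessential_indep_image _ _ _ Hco).
    + intros w Hw. destruct (proj1 Hepi w) as [v <-].
      assert (Hv : indep G v) by exact (indep_of_indep_image phi v Hw).
      exists v. split; [now split|].
      intros v' [_ Ev']. exact (coessential_indep_fiber _ _ _ Hco v v' Hv Ev').
  - intros [[Hinj _] [Himg Huniq]]. split; [exact Hepi|].
    assert (Hfiber : forall v v', indep G v -> indep G v' ->
                       Vmap phi v = Vmap phi v' -> v = v').
    { intros v v' Hv Hv' E.
      destruct (Huniq _ (Himg v Hv)) as [u [_ Hu]].
      now rewrite (Hu v), (Hu v'). }
    intros A alpha Hcomp. split.
    + exact (criterion_Vmap_surjective G H phi Hinj Himg Hfiber A alpha Hcomp).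
    + exact (criterion_Emap_surjective G H phi Hinj A alpha Hcomp).
Qed.
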